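(* Let $\boldsymbol{\nu}$ be a bandit instance with $\nu_a=\mathrm{Bernoulli}(\mu_a)$ and $\mu_1>\mu_2\ge\dots\ge\mu_K$. Let $\Delta_a=\mu_1-\mu_a$ and $\Delta_{\min}=\min_{a\ne1}\Delta_a$. Then $$T^\star_{\mathrm{TV}}(\boldsymbol{\nu})=\frac{1}{\Delta_{\min}}+\sum_{a=2}^K\frac{1}{\Delta_a},\qquad\text{and}\qquad \frac{1}{\Delta_{\min}}\le T^\star_{\mathrm{TV}}(\boldsymbol{\nu})\le\frac{K}{\Delta_{\min}}.$$
   Context: $\big(T^\star_{\mathrm{TV}}(\boldsymbol{\nu})\big)^{-1}=\sup_{\omega\in\Sigma_K}\inf_{\boldsymbol{\lambda}\in\operatorname{Alt}(\boldsymbol{\nu})}\sum_{a=1}^K\omega_a\mathrm{TV}(\nu_a,\lambda_a)$, where $\Sigma_K$ is the probability simplex in $\mathbb{R}^K$, $\mathrm{TV}(P,Q)=\sup_A(P(A)-Q(A))$, and $\operatorname{Alt}(\boldsymbol{\nu})$ is the set of Bernoulli instances $\boldsymbol{\lambda}=(\mathrm{Bernoulli}(\rho_a))_{a\in[K]}$ whose optimal arm (arm of largest mean) differs from that of $\boldsymbol{\nu}$. *)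

From HB Require Import structures.
From mathcomp Require Import all_boot all_order all_algebra.
From mathcomp Require Import all_classical all_reals.
Set Implicit Arguments. Unset Strict Implicit. Unset Printing Implicit Defensive.
Import Order.TTheory GRing.Theory Num.Theory.
Local Open Scope classical_set_scope.
Local Open Scope ring_scope.

(* Arms are indexed 1..K (natural numbers); values outside 1..K are irrelevant. *)

(* The Bernoulli(p) distribution on {0,1} ~ bool (true = 1), as a function
   on events A : {set bool}. *)
Definition bernoulli {R : realType} (p : R) (A : {set bool}) : R :=
  (if true \in A then p else 0) + (if false \in A then 1 - p else 0).

Definition TV {R : realType} (P Q : {set bool} -> R) : R :=
  sup [set P A - Q A | A in [set: {set bool}]].

Definition simplex {R : realType} (K : nat) : set (nat -> R) :=
  [set w | (forall a, (1 <= a <= K)%N -> 0 <= w a) /\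
           \sum_(1 <= a < K.+1) w a = 1].

(* Alt(nu) for an instance whose unique optimal arm is arm 1: Bernoulli
   instances (rho_a)_{a in [K]} with rho_a in [0,1] whose optimal arm is not 1,
   i.e. some arm a <> 1 has strictly larger mean than arm 1. *)
Definition Alt1 {R : realType} (K : nat) : set (nat -> R) :=
  [set rho | (forall a, (1 <= a <= K)%N -> 0 <= rho a <= 1) /\
             exists a, (2 <= a <= K)%N /\ rho 1%N < rho a].

Definition Tstar_TV {R : realType} (K : nat) (mu : nat -> R) : R :=
  (sup [set inf [set \sum_(1 <= a < K.+1)
                        w a * TV (bernoulli (mu a)) (bernoulli (rho a))
                 | rho in Alt1 K]
       | w in simplex K])^-1.

From HB Require Import structures.
From mathcomp Require Import all_boot all_order all_algebra.
From mathcomp Require Import all_classical all_reals.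
From mathcomp Require Import lra.
Import Order.TTheory GRing.Theory Num.Theory.
Local Open Scope classical_set_scope.
Local Open Scope ring_scope.

(* The TV distance between Bernoulli laws is |p - q|.  An alternative must
   lift some arm a above arm 1, which costs at least min(w_1, w_a) Delta_a,
   and moving only the cheaper of the two arms costs arbitrarily close to
   that; so the inner infimum is min_a min(w_1, w_a) Delta_a.  Let
   T = 1 / Delta_2 + sum_a 1 / Delta_a and c = 1 / T.  If all these terms
   exceeded c, then w_1 > c / Delta_2 and w_a > c / Delta_a, so the weights
   would sum to more than c T = 1; the weights w_1 = c / Delta_2 and
   w_a = c / Delta_a attain c.  Sortedness makes Delta_2 the minimal gap. *)

Lemma sup_eq_max (R : realType) (E : set R) (x : R) :
  E x -> ubound E x -> sup E = x.
Proof.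
move=> Ex ubx; apply/le_anti/andP; split; first by apply: ge_sup => //; exists x.
by apply: ub_le_sup => //; exists x.
Qed.

Lemma TV_bernoulli (R : realType) (p q : R) :
  TV (bernoulli p) (bernoulli q) = `|p - q|.
Proof.
apply: sup_eq_max; last first.
  move=> _ [A _ <-]; rewrite /bernoulli.
  have := ler_norm (p - q); have := ler_norm (q - p); rewrite distrC.
  by case: (true \in A); case: (false \in A); lra.
have [le_qp|lt_pq] := lerP q p.
  by exists [set true]%SET => //; rewrite /bernoulli !inE /=; lra.
by exists [set false]%SET => //; rewrite /bernoulli !inE /=; lra.
Qed.

Lemma le_of_le_add_tmul (R : realFieldType) (x y c : R) : 0 <= c ->
  (forall t, 0 < t <= 1 -> x <= y + t * c) -> x <= y.
Proof.
move=> c_ge0 le_xy; apply/ler_addgt0Pr => e e_gt0.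
have ec_gt0 : 0 < e + c by lra.
apply: le_trans (le_xy (e / (e + c)) _) _.
  by rewrite divr_gt0 //= ler_pdivrMr //; lra.
by rewrite lerD2l mulrAC ler_pdivrMr //; nra.
Qed.

Lemma sum_split1D1 {R : nmodType} (F : nat -> R) {K a : nat} : (2 <= a <= K)%N ->
  \sum_(1 <= b < K.+1) F b = F 1%N + F a + \sum_(2 <= b < K.+1 | b != a) F b.
Proof.
move=> /andP[a_ge2 a_leK].
rewrite big_ltn ?ltnS ?(leq_trans _ a_leK) ?(leq_trans _ a_ge2) // -addrA.
by rewrite (bigD1_seq a) ?iota_uniq // mem_index_iota a_ge2 ltnS.
Qed.

Definition inf_alt_TV {R : realType} (K : nat) (mu w : nat -> R) : R :=
  inf [set \sum_(1 <= a < K.+1) w a * TV (bernoulli (mu a)) (bernoulli (rho a))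
      | rho in Alt1 K].

Section InfOverAlternatives.
Context {R : realType} {K : nat} {mu w : nat -> R}.
Hypothesis w_ge0 : forall a, (1 <= a <= K)%N -> 0 <= w a.
Hypothesis mu01 : forall a, (1 <= a <= K)%N -> 0 <= mu a <= 1.

Lemma inf_alt_TVE : inf_alt_TV K mu w =
  inf [set \sum_(1 <= a < K.+1) w a * `|mu a - rho a| | rho in Alt1 K].
Proof.
congr (inf (image _ _)); apply/funext => rho.
by apply: eq_bigr => a _; rewrite TV_bernoulli.
Qed.

Lemma alt_cost_ge0 (rho : nat -> R) :
  0 <= \sum_(1 <= a < K.+1) w a * `|mu a - rho a|.
Proof.
rewrite big_nat; apply: sumr_ge0 => a /andP[a_ge1 a_leK].
by rewrite mulr_ge0 ?w_ge0 // a_ge1 -ltnS.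
Qed.

Lemma inf_alt_TV_le_pair a x y : (2 <= a <= K)%N ->
  0 <= x -> x < y -> y <= 1 ->
  inf_alt_TV K mu w <= w 1%N * `|mu 1%N - x| + w a * `|mu a - y|.
Proof.
move=> a2K x_ge0 lt_xy y_le1.
have a_neq1 : a != 1%N by case/andP: a2K; case: a => [|[]].
pose rho b := if b == 1%N then x else if b == a then y else mu b.
rewrite inf_alt_TVE; apply: ge_inf.
  by exists 0 => _ [r _ <-]; apply: alt_cost_ge0.
exists rho.
  split=> [b b1K|]; last by exists a; rewrite /rho /= eqxx (negbTE a_neq1).
  rewrite /rho /=; case: (b =P 1%N) => _; [|case: (b =P a) => _].
  - by apply/andP; split; lra.
  - by apply/andP; split; lra.
  - exact: mu01.
rewrite (sum_split1D1 _ a2K) /rho /= (negbTE a_neq1) eqxx big1_seq ?addr0 //.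
move=> b /andP[b_neqa]; rewrite mem_index_iota => /andP[b_ge2 _].
have b_neq1 : b != 1%N by case: b b_ge2 {b_neqa} => [|[]].
by rewrite (negbTE b_neq1) (negbTE b_neqa) subrr normr0 mulr0.
Qed.

Lemma inf_alt_TV_le_min a : (2 <= a <= K)%N -> mu a < mu 1%N ->
  inf_alt_TV K mu w <= Num.min (w 1%N) (w a) * (mu 1%N - mu a).
Proof.
move=> a2K lt_a1; have /andP[a_ge2 a_leK] := a2K.
have a_in : (1 <= a <= K)%N by rewrite ltnW.
have one_in : (1 <= 1 <= K)%N by rewrite /= (leq_trans (ltnW a_ge2)).
have /andP[mua_ge0 _] := mu01 a a_in.
have /andP[_ mu1_le1] := mu01 1%N one_in.
have w1_ge0 := w_ge0 _ one_in; have wa_ge0 := w_ge0 _ a_in.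
have D_gt0 : 0 < mu 1%N - mu a by rewrite subr_gt0.
apply: (@le_of_le_add_tmul _ _ _ ((w 1%N + w a) * (mu 1%N - mu a))).
  by apply: mulr_ge0; lra.
move=> t /andP[t_gt0 t_le1].
have tD_gt0 : 0 < t * (mu 1%N - mu a) by rewrite mulr_gt0.
have [le_w1a|lt_wa1] := lerP (w 1%N) (w a).
- have tw_ge0 := mulr_ge0 (mulr_ge0 (ltW t_gt0) w1_ge0) (ltW D_gt0).
  apply: le_trans (@inf_alt_TV_le_pair a (mu a) (mu a + t * (mu 1%N - mu a))
    a2K _ _ _) _; [lra | lra | nra |].
  rewrite opprD addNKr normrN !ger0_norm; [nra | lra | lra].
- have tw_ge0 := mulr_ge0 (mulr_ge0 (ltW t_gt0) wa_ge0) (ltW D_gt0).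
  apply: le_trans (@inf_alt_TV_le_pair a (mu 1%N - t * (mu 1%N - mu a)) (mu 1%N)
    a2K _ _ _) _; [nra | lra | lra |].
  rewrite subKr distrC !ger0_norm; [nra | lra | lra].
Qed.

Lemma le_inf_alt_TV c : (2 <= K)%N ->
  (forall a, (2 <= a <= K)%N -> c <= Num.min (w 1%N) (w a) * (mu 1%N - mu a)) ->
  c <= inf_alt_TV K mu w.
Proof.
move=> K_ge2 c_le; rewrite inf_alt_TVE; apply: lb_le_inf.
  exists (\sum_(1 <= b < K.+1) w b * `|mu b - (if b == 2%N then 1 else 0)|).
  exists (fun b => if b == 2%N then 1 else 0) => //.
  split=> [b _|]; first by case: ifP; rewrite ?lexx ?ler01.
  by exists 2%N; rewrite /= K_ge2 ltr01.
move=> _ [rho [_ [a [a2K lt_rho1a]]] <-].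
have /andP[a_ge2 a_leK] := a2K.
have w1_ge0 : 0 <= w 1%N by rewrite w_ge0 //= (leq_trans (ltnW a_ge2)).
have wa_ge0 : 0 <= w a by rewrite w_ge0 // (ltnW a_ge2).
set m := Num.min (w 1%N) (w a).
have m_ge0 : 0 <= m by rewrite le_min w1_ge0.
have m_le_w1 : m <= w 1%N by rewrite ge_min lexx.
have m_le_wa : m <= w a by rewrite ge_min lexx orbT.
have gap_le : mu 1%N - mu a <= `|mu 1%N - rho 1%N| + `|mu a - rho a|.
  by have := ler_norm (mu 1%N - rho 1%N); have := ler_norm (rho a - mu a); rewrite distrC; lra.
rewrite (sum_split1D1 _ a2K) -[c]addr0 lerD //; last first.
  rewrite big_nat_cond; apply: sumr_ge0 => b /andP[/andP[b_ge2 b_leK] _].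
  by rewrite mulr_ge0 ?w_ge0 // (ltnW b_ge2) -ltnS.
apply: le_trans (c_le a a2K) _; apply: le_trans (ler_wpM2l m_ge0 gap_le) _.
by rewrite mulrDr lerD // ler_wpM2r.
Qed.

End InfOverAlternatives.

Section CharacteristicTime.
Context {R : realType} {K : nat} {mu : nat -> R}.
Hypotheses (K_ge2 : (2 <= K)%N) (mu01 : forall a, (1 <= a <= K)%N -> 0 <= mu a <= 1).
Hypotheses (mu2_lt_mu1 : mu 2%N < mu 1%N)
  (mu_le_mu2 : forall a, (2 <= a <= K)%N -> mu a <= mu 2%N).

Local Notation T :=
  ((mu 1%N - mu 2%N)^-1 + \sum_(2 <= a < K.+1) (mu 1%N - mu a)^-1).

Lemma gap2_le_gap a : (2 <= a <= K)%N -> mu 1%N - mu 2%N <= mu 1%N - mu a.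
Proof. by move/mu_le_mu2; rewrite lerD2l lerN2. Qed.

Lemma gap_gt0 a : (2 <= a <= K)%N -> 0 < mu 1%N - mu a.
Proof. by move/gap2_le_gap; apply: lt_le_trans; rewrite subr_gt0. Qed.

Lemma sum_inv_gaps_ge0 : 0 <= \sum_(2 <= a < K.+1) (mu 1%N - mu a)^-1.
Proof.
rewrite big_nat; apply: sumr_ge0 => a /andP[a_ge2 a_leK].
by rewrite invr_ge0 ltW // gap_gt0 // a_ge2 -ltnS.
Qed.

Lemma T_gt0 : 0 < T.
Proof.
have := sum_inv_gaps_ge0; have : 0 < (mu 1%N - mu 2%N)^-1 by rewrite invr_gt0 subr_gt0.
lra.
Qed.

Lemma inf_alt_TV_le_invT w : simplex K w -> inf_alt_TV K mu w <= T^-1.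
Proof.
move=> [w_ge0 sum_w]; set c := T^-1; rewrite leNgt; apply/negP => lt_c_inf.
have lt_w a : (2 <= a <= K)%N ->
    c / (mu 1%N - mu a) < Num.min (w 1%N) (w a).
  move=> a2K; rewrite ltr_pdivrMr ?gap_gt0 //.
  apply: lt_le_trans lt_c_inf (inf_alt_TV_le_min w_ge0 mu01 _ a2K _).
  by rewrite -subr_gt0 gap_gt0.
have two_in : (2 <= 2 <= K)%N by rewrite leqnn.
have lt_w1 : c / (mu 1%N - mu 2%N) < w 1%N.
  by apply: lt_le_trans (lt_w _ two_in) _; rewrite ge_min lexx.
have le_wa : \sum_(2 <= a < K.+1) c / (mu 1%N - mu a) <= \sum_(2 <= a < K.+1) w a.
  apply: ler_sum_nat => a /andP[a_ge2 a_leK].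
  have a2K : (2 <= a <= K)%N by rewrite a_ge2 -ltnS.
  by apply/ltW/(lt_le_trans (lt_w _ a2K)); rewrite ge_min lexx orbT.
have := ltr_leD lt_w1 le_wa.
rewrite -mulr_sumr -mulrDr mulVf ?gt_eqF ?T_gt0 //.
by rewrite -big_ltn ?sum_w ?ltxx // ltnS (leq_trans _ K_ge2).
Qed.

Lemma inf_alt_TV_attains_invT :
  exists2 w, simplex K w & inf_alt_TV K mu w = T^-1.
Proof.
set c := T^-1; have c_gt0 : 0 < c by rewrite invr_gt0 T_gt0.
pose w b := c / (mu 1%N - mu (if b == 1%N then 2%N else b)).
have w_ge0 b : (1 <= b <= K)%N -> 0 <= w b.
  move=> /andP[b_ge1 b_leK]; rewrite /w; apply: divr_ge0 (ltW c_gt0) (ltW (gap_gt0 _ _)).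
  case: ifP => [_|/negbT b_neq1]; first by rewrite leqnn K_ge2.
  by rewrite b_leK andbT ltn_neqAle b_ge1 andbT eq_sym.
have wa_le_w1 a : (2 <= a <= K)%N -> w a <= w 1%N.
  move=> a2K; rewrite /w /= ifN; last by case/andP: a2K; case: a => [|[]].
  by rewrite ler_pM2l // lef_pV2 ?posrE ?gap_gt0 ?gap2_le_gap // leqnn K_ge2.
have w_simplex : simplex K w.
  split=> //; rewrite big_ltn ?ltnS ?(leq_trans _ K_ge2) //.
  rewrite [X in _ + X](eq_big_nat _ _ (F2 := fun a => c / (mu 1%N - mu a))).
    by rewrite -mulr_sumr -mulrDr mulVf // gt_eqF ?T_gt0.
  by move=> a /andP[a_ge2 _]; rewrite /w ifN //; case: a a_ge2 => [|[]].
exists w => //; apply/le_anti; rewrite inf_alt_TV_le_invT //=.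
apply: le_inf_alt_TV w_ge0 _ K_ge2 _ => a a2K; rewrite min_r ?wa_le_w1 //.
by rewrite /w ifN ?mulfVK ?gt_eqF ?gap_gt0 //; case/andP: a2K; case: a => [|[]].
Qed.

Lemma Tstar_TVE : Tstar_TV K mu = T.
Proof.
rewrite /Tstar_TV (@sup_eq_max _ _ T^-1) ?invrK //.
  by have [w w_simplex w_opt] := inf_alt_TV_attains_invT; exists w.
by move=> _ [w w_simplex <-]; apply: inf_alt_TV_le_invT.
Qed.

Lemma Tstar_TV_bounds :
  (mu 1%N - mu 2%N)^-1 <= Tstar_TV K mu <= K%:R / (mu 1%N - mu 2%N).
Proof.
rewrite Tstar_TVE; set d := (mu 1%N - mu 2%N)^-1.
have d_gt0 : 0 < d by rewrite invr_gt0 subr_gt0.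
have : \sum_(2 <= a < K.+1) (mu 1%N - mu a)^-1 <= (K%:R - 1) * d.
  have -> : K%:R - 1 = (K.+1 - 2)%:R :> R by rewrite subSS natrB ?(ltnW K_ge2).
  rewrite mulr_natl -sumr_const_nat; apply: ler_sum_nat => a /andP[a_ge2 a_leK].
  by rewrite lef_pV2 ?posrE ?gap_gt0 ?gap2_le_gap // a_ge2 -ltnS.
have := sum_inv_gaps_ge0; lra.
Qed.

End CharacteristicTime.

Theorem proposition1 (R : realType) (K : nat) (mu : nat -> R) :
  (2 <= K)%N ->
  (forall a, (1 <= a <= K)%N -> 0 <= mu a <= 1) ->
  mu 2%N < mu 1%N ->
  (forall a, (2 <= a < K)%N -> mu a.+1 <= mu a) ->
  let Delta := fun a => mu 1%N - mu a in
  let Delta_min := \big[Num.min/Delta 2%N]_(2 <= a < K.+1) Delta a in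
  Tstar_TV K mu = (Delta_min)^-1 + \sum_(2 <= a < K.+1) (Delta a)^-1 /\
  (Delta_min)^-1 <= Tstar_TV K mu <= K%:R / Delta_min.
Proof.
move=> K_ge2 mu01 mu2_lt_mu1 mu_noninc Delta Delta_min.
have mu_le_mu2 a : (2 <= a <= K)%N -> mu a <= mu 2%N.
  have D_convex : {in [pred a | 2 <= a <= K]%N &, forall i j k,
      (i < k < j)%O -> k \in [pred a | 2 <= a <= K]%N}.
    move=> i j /andP[i_ge2 _] /andP[_ j_leK] k /andP[/ltnW ik /ltnW kj].
    by apply/andP; split; [exact: leq_trans i_ge2 ik | exact: leq_trans kj j_leK].
  move=> a2K; apply: (Order.NatMonotonyTheory.nonincn_inP D_convex) => //.
  - by move=> i /andP[i_ge2 _] /andP[_ i_ltK]; apply: mu_noninc; rewrite i_ge2.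
  - by case/andP: a2K.
have Delta_minE : Delta_min = Delta 2%N.
  rewrite /Delta_min big_seq; apply: bigmin_eq_id => a.
  by rewrite mem_index_iota ltnS; apply: gap2_le_gap.
rewrite Delta_minE; split; first exact: Tstar_TVE.
exact: Tstar_TV_bounds.
Qed.
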